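(* Let $n,d$ be positive integers. For all ${X},{Y}\in \mathbb{R}^{d\times n}$ we have $$d_{\mathcal{D}}({X},{Y})\leq 2n^{3/2}\, d_{\mathcal{G}_{\pm}}({X},{Y}).$$ Moreover, for all ${X},{Y}\in\mathbb{R}^{d\times n}$ satisfying $\|{X}\|_{1,2}\leq 1$ and $\|{Y}\|_{1,2}\leq 1$, we have $$\frac{1}{4n+2}\, d_{\mathcal{G}_{\pm}}^2({X},{Y}) \leq d_{\mathcal{D}}({X},{Y}).$$
   Context: A point set is a matrix ${X}\in\mathbb{R}^{d\times n}$ with columns $x_1,\dots,x_n\in\mathbb{R}^d$. The group $\mathcal{G}_{\pm}=O(d)\rtimes\mathbb{R}^d\times S_n$ acts on point sets by permuting the columns, applying a common orthogonal matrix to all columns, and adding a common translation vector to all columns. The Procrustes Matching metric is $$d_{\mathcal{G}_{\pm}}({X},{Y})=\Big[\min_{(\pi,R,t)\in S_n\times O(d)\times\mathbb{R}^d}\sum_{j=1}^n\|x_j-Ry_{\pi(j)}+t\|_2^2\Big]^{1/2}=\min_{g\in\mathcal{G}_{\pm}}\|{X}-g{Y}\|_F.$$ The Hard-Gromov-Wasserstein distance is $$d_{\mathcal{D}}({X},{Y})=\min_{\pi\in S_n}\sum_{i,j=1}^n\big|\,\|x_i-x_j\|_2-\|y_{\pi(i)}-y_{\pi(j)}\|_2\,\big|.$$ $\|{X}\|_{1,2}=\max_{1\le i\le n}\|x_i\|_2$. *)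

From HB Require Import structures.
From mathcomp Require Import all_boot all_order all_algebra all_fingroup.
From mathcomp Require Import classical_sets reals.
Set Implicit Arguments. Unset Strict Implicit. Unset Printing Implicit Defensive.
Import Order.TTheory GRing.Theory Num.Theory.
Local Open Scope ring_scope.
Local Open Scope classical_set_scope.

Section Defs.
Variable R : realType.

Definition colnorm (d n : nat) (X : 'M[R]_(d, n)) (j : 'I_n) : R :=
  Num.sqrt (\sum_(i < d) X i j ^+ 2).

Definition coldist (d n : nat) (X : 'M[R]_(d, n)) (i j : 'I_n) : R :=
  Num.sqrt (\sum_(k < d) (X k i - X k j) ^+ 2).

Definition norm12 (d n : nat) (X : 'M[R]_(d, n)) : R :=
  \big[Order.max/0]_(j < n) colnorm X j.

Definition is_orthogonal (d : nat) (Q : 'M[R]_d) : Prop := Q^T *m Q = 1%:M.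

Definition procrustes_cost (d n : nat) (X Y : 'M[R]_(d, n))
    (p : 'S_n) (Q : 'M[R]_d) (t : 'cV[R]_d) : R :=
  \sum_(j < n) \sum_(i < d)
     (X i j - (Q *m Y) i (p j) + t i ord0) ^+ 2.

(* Procrustes matching metric: square root of the minimum (= infimum, the
   minimum being attained) of the cost over S_n x O(d) x R^d. *)
Definition dG (d n : nat) (X Y : 'M[R]_(d, n)) : R :=
  Num.sqrt (inf [set c | exists (p : 'S_n) (Q : 'M[R]_d) (t : 'cV[R]_d),
                         is_orthogonal Q /\ c = procrustes_cost X Y p Q t]).

Definition hgw_cost (d n : nat) (X Y : 'M[R]_(d, n)) (p : 'S_n) : R :=
  \sum_(i < n) \sum_(j < n) `| coldist X i j - coldist Y (p i) (p j) |.

(* Hard Gromov-Wasserstein distance: minimum over the finite set S_n *)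
Definition dD (d n : nat) (X Y : 'M[R]_(d, n)) : R :=
  inf [set c | exists p : 'S_n, c = hgw_cost X Y p].

End Defs.

From Pilot Require Import Defs.
From HB Require Import structures.
From mathcomp Require Import all_boot all_order all_algebra all_fingroup.
From mathcomp Require Import classical_sets reals topology normedtype derive.
From mathcomp Require Import ring lra.
Import Order.TTheory GRing.Theory Num.Theory.
Import numFieldTopology.Exports numFieldNormedType.Exports.
Set Implicit Arguments. Unset Strict Implicit. Unset Printing Implicit Defensive.
Local Open Scope ring_scope.

(* For a matching (p, Q, t) with residuals e_j = x_j - Q y_(p j) + t, the
   triangle inequality bounds | |x_i - x_j| - |y_(p i) - y_(p j)| | by
   |e_i| + |e_j|; summing and applying Cauchy-Schwarz gives the first bound.
   For the second, fix p, center both point sets and let Q minimize the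
   rotational cost over the compact group O(d).  Comparing Q with H Q for
   Householder reflections H, and for products of two of them, shows that the
   cross-covariance of the x_j and the Q y_(p j) is symmetric positive
   semidefinite, and then the squared cost is at most 2n times the squared
   Frobenius distance of the Gram matrices.  The Gram matrix of a centered set
   is minus half the double centering of its squared distance matrix, double
   centering is a Frobenius contraction, and |a^2 - b^2| <= 4 |a - b| on
   [0, 2]; hence cost^2 <= 8 n hgw^2 <= ((4n + 2) hgw)^2. *)

Section RealInequalities.
Variable R : realFieldType.

Lemma sum_mul_sqr_le (I : finType) (a b : I -> R) :
  (\sum_i a i * b i) ^+ 2 <= (\sum_i a i ^+ 2) * (\sum_i b i ^+ 2).
Proof.
set A := \sum_i a i ^+ 2; set B := \sum_i b i ^+ 2; set C := \sum_i a i * b i.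
have lagrange : \sum_i \sum_j (a i * b j - a j * b i) ^+ 2 = 2 * (A * B - C ^+ 2).
  have -> : 2 * (A * B - C ^+ 2) = A * B + B * A - 2 * (C * C) by ring.
  rewrite /A /B /C !big_distrlr /= mulr_sumr -big_split -sumrB /=.
  apply: eq_bigr => i _; rewrite mulr_sumr -big_split -sumrB /=.
  by apply: eq_bigr => j _; ring.
have : 0 <= \sum_i \sum_j (a i * b j - a j * b i) ^+ 2.
  by apply: sumr_ge0 => i _; apply: sumr_ge0 => j _; exact: sqr_ge0.
by rewrite lagrange pmulr_rge0 // subr_ge0.
Qed.

Lemma sqr_sum_le_card (I : finType) (a : I -> R) :
  (\sum_i a i) ^+ 2 <= #|I|%:R * \sum_i a i ^+ 2.
Proof.
have := sum_mul_sqr_le a (fun _ => 1).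
by rewrite (eq_bigr a) => [|i _]; rewrite ?mulr1 // sumr_const expr1n mulrC.
Qed.

Lemma sum_sqr_le_sqr_sum_norm (I : finType) (e : I -> R) :
  \sum_i e i ^+ 2 <= (\sum_i `|e i|) ^+ 2.
Proof.
have le_sum i : `|e i| <= \sum_j `|e j|.
  by rewrite (bigD1 i) //= lerDl sumr_ge0.
rewrite expr2 mulr_sumr; apply: ler_sum => i _.
by rewrite -real_normK ?num_real // expr2 ler_wpM2r.
Qed.

Lemma eq0_of_lin_le_sqr (a b : R) : (forall t, t * a <= t ^+ 2 * b) -> a = 0.
Proof.
move=> lin_le_sqr; pose k := `|b| + 1.
have k_gt0 : 0 < k by rewrite ltr_pwDr.
have := lin_le_sqr (a / k); rewrite -(ler_pM2r (exprn_gt0 2 k_gt0)).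
have -> : a / k * a * k ^+ 2 = a ^+ 2 * k by field; rewrite gt_eqF.
have -> : (a / k) ^+ 2 * b * k ^+ 2 = a ^+ 2 * b by field; rewrite gt_eqF.
have := ler_norm b; have := sqr_ge0 a; rewrite /k => a2_ge0 b_le a2k_le.
have : a ^+ 2 <= 0 by nra.
by move=> a2_le0; apply/eqP; rewrite -sqrf_eq0 eq_le a2_le0 sqr_ge0.
Qed.

Lemma sqr_subr_sqr_le (a b : R) :
  0 <= a <= 2 -> 0 <= b <= 2 -> (a ^+ 2 - b ^+ 2) ^+ 2 <= 16 * (a - b) ^+ 2.
Proof.
move=> /andP[a_ge0 a_le2] /andP[b_ge0 b_le2].
have -> : (a ^+ 2 - b ^+ 2) ^+ 2 = (a + b) ^+ 2 * (a - b) ^+ 2 by ring.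
by rewrite ler_wpM2r ?sqr_ge0 //; nra.
Qed.

End RealInequalities.

Section Dot.
Variables (R : realFieldType) (d : nat).
Implicit Types (u v w : 'cV[R]_d) (a : R).

Definition dot u v := \sum_k u k 0 * v k 0.

Lemma dotC u v : dot u v = dot v u.
Proof. by apply: eq_bigr => k _; rewrite mulrC. Qed.

Lemma dotvv_ge0 u : 0 <= dot u u.
Proof. by apply: sumr_ge0 => k _; rewrite -expr2 sqr_ge0. Qed.

Lemma dot_trmx u v : dot u v = (u^T *m v) 0 0.
Proof. by rewrite mxE; apply: eq_bigr => k _; rewrite mxE. Qed.

Lemma trmx_mul_dot u v : u^T *m v = (dot u v)%:M.
Proof. by apply/matrixP => i j; rewrite !ord1 [RHS]mxE eqxx mulr1n dot_trmx. Qed.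

Lemma dot_deltal k u : dot (delta_mx k 0) u = u k 0.
Proof.
rewrite /dot (bigD1 k) //= big1 => [|l /negbTE l_neq_k]; rewrite !mxE ?l_neq_k ?mul0r //.
by rewrite !eqxx mul1r addr0.
Qed.

Lemma dotDl u v w : dot (u + v) w = dot u w + dot v w.
Proof. by rewrite /dot -big_split; apply: eq_bigr => k _; rewrite mxE mulrDl. Qed.

Lemma dotNl u v : dot (- u) v = - dot u v.
Proof. by rewrite /dot -sumrN; apply: eq_bigr => k _; rewrite mxE mulNr. Qed.

Lemma dotBl u v w : dot (u - v) w = dot u w - dot v w.
Proof. by rewrite dotDl dotNl. Qed.

Lemma dotZl a u v : dot (a *: u) v = a * dot u v.
Proof. by rewrite /dot mulr_sumr; apply: eq_bigr => k _; rewrite mxE mulrA. Qed.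

Lemma dotDr u v w : dot u (v + w) = dot u v + dot u w.
Proof. by rewrite dotC dotDl !(dotC u). Qed.

Lemma dotBr u v w : dot u (v - w) = dot u v - dot u w.
Proof. by rewrite dotC dotBl !(dotC u). Qed.

Lemma dotZr a u v : dot u (a *: v) = a * dot u v.
Proof. by rewrite dotC dotZl dotC. Qed.

Lemma dotr0 u : dot u 0 = 0.
Proof. by rewrite /dot big1 // => k _; rewrite mxE mulr0. Qed.

Lemma dot_sumr (I : finType) u (F : I -> 'cV[R]_d) :
  dot u (\sum_i F i) = \sum_i dot u (F i).
Proof.
rewrite /dot exchange_big /=; apply: eq_bigr => k _.
by rewrite summxE mulr_sumr.
Qed.

Lemma dotvvB u v : dot (u - v) (u - v) = dot u u + dot v v - 2 * dot u v.
Proof. by rewrite dotBl !dotBr (dotC v u); ring. Qed.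

Lemma dot_sqr_le u v : dot u v ^+ 2 <= dot u u * dot v v.
Proof.
have := sum_mul_sqr_le (fun k => u k 0) (fun k => v k 0).
by rewrite !(eq_bigr _ (fun k _ => expr2 _)).
Qed.

End Dot.

Section Norm.
Variables (R : rcfType) (d : nat).
Implicit Types u v : 'cV[R]_d.

Definition vnorm u := Num.sqrt (dot u u).

Lemma vnorm_ge0 u : 0 <= vnorm u.
Proof. exact: sqrtr_ge0. Qed.

Lemma vnorm_sqr u : vnorm u ^+ 2 = dot u u.
Proof. by rewrite sqr_sqrtr // dotvv_ge0. Qed.

Lemma dot_le_vnorm u v : dot u v <= vnorm u * vnorm v.
Proof.
apply: le_trans (ler_norm _) _.
rewrite -sqrtr_sqr /vnorm -sqrtrM ?dotvv_ge0 //.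
by rewrite ler_wsqrtr // dot_sqr_le.
Qed.

Lemma vnormN u : vnorm (- u) = vnorm u.
Proof. by rewrite /vnorm dotNl dotC dotNl opprK. Qed.

Lemma vnormD_le u v : vnorm (u + v) <= vnorm u + vnorm v.
Proof.
rewrite -(ger0_norm (addr_ge0 (vnorm_ge0 u) (vnorm_ge0 v))) -sqrtr_sqr.
rewrite ler_wsqrtr // dotDl !dotDr (dotC v u) -!vnorm_sqr.
by have := dot_le_vnorm u v; lra.
Qed.

Lemma vnormB_le u v : vnorm (u - v) <= vnorm u + vnorm v.
Proof. by rewrite -(vnormN v) vnormD_le. Qed.

Lemma vnorm_dist_le u v : `|vnorm u - vnorm v| <= vnorm (u - v).
Proof.
have le_u := vnormD_le (u - v) v; have le_v := vnormD_le (v - u) u.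
rewrite subrK in le_u; rewrite subrK -opprB vnormN in le_v.
by rewrite ler_norml; apply/andP; split; lra.
Qed.

Lemma sum_vnorm_le (I : finType) (e : I -> 'cV[R]_d) :
  \sum_i vnorm (e i) <= Num.sqrt #|I|%:R * Num.sqrt (\sum_i dot (e i) (e i)).
Proof.
rewrite -sqrtrM ?ler0n // -(ger0_norm (sumr_ge0 _ (fun i _ => vnorm_ge0 (e i)))).
rewrite -sqrtr_sqr ler_wsqrtr //; under [X in _ * X]eq_bigr do rewrite -vnorm_sqr.
exact: sqr_sum_le_card.
Qed.

End Norm.

Section Orthogonal.
Variables (R : realType) (d : nat).
Implicit Types (u v w : 'cV[R]_d) (Q : 'M[R]_d).

Lemma is_orthogonalP Q :
  Defs.is_orthogonal Q <-> forall k l, \sum_i Q i k * Q i l = (k == l)%:R.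
Proof.
split => [QtQ k l | Qkl]; last first.
  by apply/matrixP => k l; rewrite !mxE -Qkl; apply: eq_bigr => i _; rewrite mxE.
have := congr1 (fun M : 'M[R]_d => M k l) QtQ; rewrite !mxE => <-.
by apply: eq_bigr => i _; rewrite mxE.
Qed.

Lemma orthogonal_dot Q u v : Defs.is_orthogonal Q -> dot (Q *m u) (Q *m v) = dot u v.
Proof. by move=> QtQ; rewrite !dot_trmx trmx_mul -mulmxA (mulmxA Q^T) QtQ mul1mx. Qed.

Lemma orthogonal_vnorm Q u : Defs.is_orthogonal Q -> vnorm (Q *m u) = vnorm u.
Proof. by move=> QtQ; rewrite /vnorm orthogonal_dot. Qed.

Lemma orthogonal_of_dot Q : (forall u v, dot (Q *m u) (Q *m v) = dot u v) ->
  Defs.is_orthogonal Q.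
Proof.
move=> Qdot; apply/matrixP => k l; have := Qdot (delta_mx k 0) (delta_mx l 0).
rewrite -!colE [in X in _ = X -> _]dot_trmx trmx_delta mul_delta_mx_cond.
rewrite mulmxnE !mxE eqxx => <-.
by apply: eq_bigr => i _; rewrite !mxE.
Qed.

Lemma orthogonal_mul Q Q' : Defs.is_orthogonal Q -> Defs.is_orthogonal Q' ->
  Defs.is_orthogonal (Q *m Q').
Proof.
move=> QtQ Q'tQ'; rewrite /Defs.is_orthogonal trmx_mul mulmxA.
by rewrite -(mulmxA _ _ Q) QtQ mulmx1.
Qed.

Definition householder w : 'M[R]_d := 1%:M - (2 / dot w w) *: (w *m w^T).

Lemma householder_mulmx w v :
  householder w *m v = v - (2 / dot w w * dot w v) *: w.
Proof.
by rewrite mulmxBl mul1mx -scalemxAl -mulmxA trmx_mul_dot mul_mx_scalar scalerA.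
Qed.

Lemma dot_householder w u v :
  dot u (householder w *m v) = dot u v - 2 / dot w w * dot w v * dot u w.
Proof. by rewrite householder_mulmx dotBr dotZr. Qed.

Lemma householder_orthogonal w : dot w w != 0 -> Defs.is_orthogonal (householder w).
Proof.
move=> ww0; apply: orthogonal_of_dot => u v.
rewrite !householder_mulmx dotBl !dotBr !dotZl !dotZr (dotC u w).
by field.
Qed.

End Orthogonal.

Section Centering.
Variables (R : realFieldType) (n : nat).
Hypothesis n_gt0 : (0 < n)%N.

Let n_neq0 : n%:R != 0 :> R.
Proof. by rewrite pnatr_eq0 -lt0n. Qed.

(* The double centering J N J of N, where J = 1 - n^-1 (1 1^T). *)
Definition dcenter (N : 'I_n -> 'I_n -> R) i j :=
  N i j - n%:R^-1 * \sum_k N k j - n%:R^-1 * \sum_k N i k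
  + n%:R^-1 * n%:R^-1 * \sum_k \sum_l N k l.

Lemma dcenterB (N N' : 'I_n -> 'I_n -> R) i j :
  dcenter N i j - dcenter N' i j = dcenter (fun k l => N k l - N' k l) i j.
Proof.
rewrite /dcenter; under [X in _ = _ + _ * X]eq_bigr do rewrite sumrB.
by rewrite !sumrB; ring.
Qed.

Lemma sum_sqr_center_le (a : 'I_n -> R) :
  \sum_i (a i - n%:R^-1 * \sum_k a k) ^+ 2 <= \sum_i a i ^+ 2.
Proof.
set m := n%:R^-1 * \sum_k a k.
have sum_a : \sum_k a k = n%:R * m by rewrite /m mulrA divff // mul1r.
have -> : \sum_i (a i - m) ^+ 2 = \sum_i a i ^+ 2 - n%:R * m ^+ 2.
  rewrite (eq_bigr (fun i => a i ^+ 2 - 2 * m * a i + m ^+ 2)) => [|i _]; last by ring.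
  by rewrite big_split sumrB /= sumr_const card_ord -mulr_sumr sum_a; ring.
by rewrite gerBl mulr_ge0 ?ler0n ?sqr_ge0.
Qed.

Lemma sum_sqr_dcenter_le (N : 'I_n -> 'I_n -> R) :
  \sum_i \sum_j dcenter N i j ^+ 2 <= \sum_i \sum_j N i j ^+ 2.
Proof.
pose N1 i j := N i j - n%:R^-1 * \sum_k N k j.
have dcenterE i j : dcenter N i j = N1 i j - n%:R^-1 * \sum_l N1 i l.
  have swap : \sum_l \sum_k N k l = \sum_k \sum_l N k l by rewrite exchange_big.
  by rewrite /dcenter /N1 sumrB -mulr_sumr swap; ring.
apply: (@le_trans _ _ (\sum_i \sum_j N1 i j ^+ 2)).
  apply: ler_sum => i _; under eq_bigr do rewrite dcenterE.
  exact: (sum_sqr_center_le (N1 i)).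
rewrite exchange_big [leRHS]exchange_big /=.
by apply: ler_sum => j _; exact: (sum_sqr_center_le (N ^~ j)).
Qed.

Lemma dcenter_sqdist (G N : 'I_n -> 'I_n -> R) :
  (forall a, \sum_b G a b = 0) -> (forall a b, G a b = G b a) ->
  (forall a b, N a b = G a a + G b b - 2 * G a b) ->
  forall i j, dcenter N i j = - 2 * G i j.
Proof.
move=> G_row0 G_sym NE i j; pose tau := \sum_k G k k.
have G_col0 a : \sum_b G b a = 0 by under eq_bigr do rewrite G_sym; exact: G_row0.
have row_sum a : \sum_b N a b = n%:R * G a a + tau.
  under eq_bigr do rewrite NE.
  rewrite sumrB big_split /= sumr_const card_ord -mulr_sumr G_row0 mulr0.
  by rewrite -mulr_natl /tau; ring.
have col_sum b : \sum_a N a b = tau + n%:R * G b b.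
  under eq_bigr do rewrite NE.
  rewrite sumrB big_split /= sumr_const card_ord -mulr_sumr G_col0 mulr0.
  by rewrite -mulr_natl /tau; ring.
have total : \sum_a \sum_b N a b = 2 * n%:R * tau.
  under eq_bigr do rewrite row_sum.
  by rewrite big_split /= sumr_const card_ord -mulr_sumr -mulr_natl /tau; ring.
by rewrite /dcenter row_sum col_sum total NE; field.
Qed.

Definition centroid d (u : 'I_n -> 'cV[R]_d) := n%:R^-1 *: \sum_j u j.

Definition centered d (u : 'I_n -> 'cV[R]_d) j := u j - centroid u.

Lemma sum_centered d (u : 'I_n -> 'cV[R]_d) : \sum_j centered u j = 0.
Proof.
by rewrite sumrB sumr_const card_ord /centroid -scaler_nat scalerA mulfV // scale1r subrr.
Qed.

(* The identity behind classical multidimensional scaling. *)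
Lemma dot_centered d (u : 'I_n -> 'cV[R]_d) i j :
  dot (centered u i) (centered u j) =
  - dcenter (fun a b => dot (u a - u b) (u a - u b)) i j / 2.
Proof.
rewrite (@dcenter_sqdist (fun a b => dot (centered u a) (centered u b))) => [|a|a b|a b].
- by field.
- by rewrite -dot_sumr sum_centered dotr0.
- exact: dotC.
have -> : u a - u b = centered u a - centered u b by rewrite /centered opprB addrA subrK.
exact: dotvvB.
Qed.

Lemma gram_centered_sqr_le d d' (u : 'I_n -> 'cV[R]_d) (v : 'I_n -> 'cV[R]_d') :
  \sum_i \sum_j
       (dot (centered u i) (centered u j) - dot (centered v i) (centered v j)) ^+ 2
  <= 4^-1 * \sum_i \sum_j
       (dot (u i - u j) (u i - u j) - dot (v i - v j) (v i - v j)) ^+ 2.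
Proof.
set DU := fun a b => dot (u a - u b) (u a - u b).
set DV := fun a b => dot (v a - v b) (v a - v b).
have gramE i j : dot (centered u i) (centered u j) - dot (centered v i) (centered v j) =
    - dcenter (fun a b => DU a b - DV a b) i j / 2.
  by rewrite !dot_centered -dcenterB; field.
rewrite [leLHS](_ : _ = 4^-1 *
    \sum_i \sum_j dcenter (fun a b => DU a b - DV a b) i j ^+ 2).
  by rewrite ler_wpM2l ?invr_ge0 ?ler0n // sum_sqr_dcenter_le.
rewrite mulr_sumr; apply: eq_bigr => i _; rewrite mulr_sumr; apply: eq_bigr => j _.
by rewrite gramE; field.
Qed.

End Centering.

Section CrossCovariance.
Variables (R : realFieldType) (I : finType) (d : nat).
Implicit Types u v z f : I -> 'cV[R]_d.

Definition crossmx u v : 'M[R]_d := \sum_j u j *m (v j)^T.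

Lemma crossmxE u v a b : crossmx u v a b = \sum_j u j a 0 * v j b 0.
Proof. by rewrite summxE; apply: eq_bigr => j _; rewrite mxE big_ord1 mxE. Qed.

Lemma dot_crossmx u v w w' :
  dot w (crossmx u v *m w') = \sum_j dot w (u j) * dot (v j) w'.
Proof.
rewrite mulmx_suml dot_sumr; apply: eq_bigr => j _.
by rewrite -mulmxA trmx_mul_dot mul_mx_scalar dotZr mulrC.
Qed.

Lemma sum_dot_swap_ge0 z f : (crossmx z f)^T = crossmx z f ->
  0 <= \sum_i \sum_j dot (z i) (f j) * dot (z j) (f i).
Proof.
move=> K_sym.
have K_swap a b : crossmx z f b a = crossmx z f a b by rewrite -[in LHS]K_sym mxE.
suff -> : \sum_i \sum_j dot (z i) (f j) * dot (z j) (f i) =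
    \sum_a \sum_b crossmx z f a b * crossmx z f b a.
  by apply: sumr_ge0 => a _; apply: sumr_ge0 => b _; rewrite K_swap -expr2 sqr_ge0.
under [RHS]eq_bigr do under eq_bigr do rewrite !crossmxE big_distrlr /=.
rewrite /dot; under [LHS]eq_bigr do under eq_bigr do rewrite big_distrlr /=.
under eq_bigr do rewrite exchange_big.
under eq_bigr do under eq_bigr do rewrite exchange_big.
rewrite exchange_big; under eq_bigr do rewrite exchange_big.
by do 4![apply: eq_bigr => ? _]; ring.
Qed.

(* With z = u - v and f = u + v, the Gram difference is the symmetric part of
   A i j = <z i, f j>.  Symmetry of the cross-covariance makes
   \sum A i j * A j i a sum of squares, and its positivity gives
   \sum <z i, z j>^2 <= \sum A i j ^2. *)
Lemma sqr_sum_dist_le_gram u v :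
    (forall w, 0 <= dot w (crossmx u v *m w)) -> (crossmx u v)^T = crossmx u v ->
  (\sum_j dot (u j - v j) (u j - v j)) ^+ 2 <=
  2 * #|I|%:R * \sum_i \sum_j (dot (u i) (u j) - dot (v i) (v j)) ^+ 2.
Proof.
move=> C_psd C_sym.
pose z j := u j - v j; pose f j := u j + v j; pose A i j := dot (z i) (f j).
have gramE i j : dot (u i) (u j) - dot (v i) (v j) = (A i j + A j i) / 2.
  rewrite /A /z /f !dotBl !dotDr (dotC (u j) (u i)) (dotC (v j) (v i)).
  by rewrite (dotC (u j) (v i)) (dotC (v j) (u i)); field.
have gram_sum : \sum_i \sum_j (dot (u i) (u j) - dot (v i) (v j)) ^+ 2 =
    (\sum_i \sum_j A i j ^+ 2 + \sum_i \sum_j A i j * A j i) / 2.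
  have A_swap : \sum_i \sum_j A j i ^+ 2 = \sum_i \sum_j A i j ^+ 2.
    by rewrite exchange_big.
  transitivity ((\sum_i \sum_j A i j ^+ 2 + \sum_i \sum_j A j i ^+ 2 +
                  2 * \sum_i \sum_j A i j * A j i) / 4); last by rewrite A_swap /A; field.
  rewrite mulr_sumr -!big_split mulr_suml /=; apply: eq_bigr => i _.
  rewrite mulr_sumr -!big_split mulr_suml /=; apply: eq_bigr => j _.
  by rewrite gramE /A; field.
have A_swap_ge0 : 0 <= \sum_i \sum_j A i j * A j i.
  apply: sum_dot_swap_ge0; apply/matrixP => a b; rewrite mxE !crossmxE.
  have := congr1 (fun M : 'M[R]_d => M a b) C_sym; rewrite /= mxE !crossmxE => C_ba.
  apply/eqP; rewrite -subr_eq0 -sumrB.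
  rewrite (eq_bigr (fun j => 2 * (u j b 0 * v j a 0 - u j a 0 * v j b 0))) => [|j _].
    by rewrite -mulr_sumr sumrB C_ba subrr mulr0.
  by rewrite !mxE; ring.
have zz_le_A : \sum_i \sum_j dot (z i) (z j) ^+ 2 <= \sum_i \sum_j A i j ^+ 2.
  rewrite -subr_ge0 -sumrB; apply: sumr_ge0 => i _; rewrite -sumrB.
  rewrite (eq_bigr (fun j => 4 * (dot (z i) (u j) * dot (v j) (z i)))) => [|j _].
    by rewrite -mulr_sumr -dot_crossmx mulr_ge0.
  by rewrite /A /f /z /= (dotC (v j)) !dotBr !dotDr; ring.
have diag_le : \sum_i dot (z i) (z i) ^+ 2 <= \sum_i \sum_j dot (z i) (z j) ^+ 2.
  apply: ler_sum => i _; rewrite (bigD1 i) //= lerDl.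
  by apply: sumr_ge0 => j _; exact: sqr_ge0.
apply: le_trans (sqr_sum_le_card (fun i => dot (z i) (z i))) _.
have halfK (x y : R) : 2 * x * (y / 2) = x * y by field.
rewrite gram_sum halfK ler_wpM2l ?ler0n //.
have := le_trans diag_le zz_le_A; lra.
Qed.

End CrossCovariance.

Section OptimalRotation.
Variables (R : realType) (I : finType) (d : nat) (u y : I -> 'cV[R]_d).

Definition rot_cost (M : 'M[R]_d) := \sum_j dot (u j - M *m y j) (u j - M *m y j).

Variable Q : 'M[R]_d.
Hypothesis Q_orth : Defs.is_orthogonal Q.
Hypothesis Q_min : forall Q', Defs.is_orthogonal Q' -> rot_cost Q <= rot_cost Q'.

Let v j := Q *m y j.

Lemma sum_orthogonal_of_dot_le H : Defs.is_orthogonal H ->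
  \sum_j dot (u j) (H *m v j) <= \sum_j dot (u j) (v j).
Proof.
move=> H_orth; have := Q_min (orthogonal_mul H_orth Q_orth).
rewrite -subr_ge0 /rot_cost -sumrB.
rewrite (eq_bigr (fun j => 2 * (dot (u j) (v j) - dot (u j) (H *m v j)))) => [|j _].
  by rewrite -mulr_sumr sumrB pmulr_rge0 // subr_ge0.
by rewrite -mulmxA !dotvvB orthogonal_dot //; ring.
Qed.

(* Compare Q with H Q for the reflection H along w. *)
Lemma crossmx_psd w : 0 <= dot w (crossmx u v *m w).
Proof.
rewrite dot_crossmx; have [ww0|ww_neq0] := eqVneq (dot w w) 0.
  have dot_w x : dot w x = 0.
    apply/eqP; rewrite -sqrf_eq0 eq_le sqr_ge0 andbT.
    by have := dot_sqr_le w x; rewrite ww0 mul0r.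
  by apply: sumr_ge0 => j _; rewrite dot_w mul0r.
have := sum_orthogonal_of_dot_le (householder_orthogonal ww_neq0).
rewrite (eq_bigr (fun j => dot (u j) (v j) -
    2 / dot w w * (dot w (u j) * dot (v j) w))) => [|j _].
  by rewrite sumrB gerBl -mulr_sumr pmulr_rge0 // divr_gt0 // lt_def ww_neq0 dotvv_ge0.
by rewrite dot_householder (dotC (u j) w) (dotC w (v j)); ring.
Qed.

(* Compare Q with H Q for a rotation H in the (a, b)-plane, written as the
   product of two reflections. *)
Lemma crossmx_sym : (crossmx u v)^T = crossmx u v.
Proof.
apply/matrixP => a b; rewrite mxE; have [-> //|b_neq_a] := eqVneq b a.
have ba := negbTE b_neq_a; have ab : (a == b) = false by rewrite eq_sym.
apply/eqP; rewrite eq_sym -subr_eq0; apply/eqP.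
apply: (@eq0_of_lin_le_sqr _ _ (crossmx u v a a + crossmx u v b b)) => t.
pose e : 'cV[R]_d := delta_mx a 0; pose w := e + t *: delta_mx b 0.
have dot_e x : dot e x = x a 0 by rewrite dot_deltal.
have dot_w x : dot w x = x a 0 + t * x b 0 by rewrite dotDl dotZl !dot_deltal.
have ee : dot e e = 1 by rewrite dot_e mxE !eqxx.
have ew : dot e w = 1 by rewrite dot_e !mxE ab !eqxx mulr0 addr0.
have ww : dot w w = 1 + t ^+ 2 by rewrite dot_w !mxE ab ba !eqxx /=; ring.
have t2_gt0 : 0 < 1 + t ^+ 2 by rewrite ltr_pwDl ?sqr_ge0.
have ee_neq0 : dot e e != 0 by rewrite ee oner_neq0.
have ww_neq0 : dot w w != 0 by rewrite ww gt_eqF.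
have := sum_orthogonal_of_dot_le
  (orthogonal_mul (householder_orthogonal ee_neq0) (householder_orthogonal ww_neq0)).
pose c := 2 / (1 + t ^+ 2).
rewrite (eq_bigr (fun j => dot (u j) (v j) + c * (t * (u j a 0 * v j b 0) -
    t * (u j b 0 * v j a 0) - t ^+ 2 * (u j a 0 * v j a 0 + u j b 0 * v j b 0))))
  => [|j _]; last first.
  rewrite -mulmxA !dot_householder ee ew ww (dotC (u j) e) (dotC (u j) w).
  by rewrite !dot_e !dot_w /c; field; rewrite gt_eqF.
rewrite big_split /= gerDl -mulr_sumr pmulr_rle0 ?divr_gt0 //.
rewrite !sumrB -!mulr_sumr big_split /= !crossmxE; lra.
Qed.

End OptimalRotation.

Section OrthogonalArgmin.
Local Open Scope classical_set_scope.
Variables (R : realType) (d : nat).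

Lemma continuous_sum (T : topologicalType) (I : finType) (F : I -> T -> R) :
  (forall i, continuous (F i)) -> continuous (fun x => \sum_i F i x).
Proof.
by move=> F_cont; apply: continuous_big => [|i _]; [exact: add_continuous|exact: F_cont].
Qed.

Lemma continuous_vec_mx_entry i j :
  continuous (fun v : 'rV[R]_(d * d) => vec_mx v i j).
Proof.
have -> : (fun v : 'rV[R]_(d * d) => vec_mx v i j) = (fun v => v 0 (mxvec_index i j)).
  by apply: boolp.funext => v; rewrite -[in RHS](vec_mxK v) mxvecE.
exact: coord_continuous.
Qed.

Lemma orthogonal_entry_le1 (Q : 'M[R]_d) i k : Defs.is_orthogonal Q -> `|Q i k| <= 1.
Proof.
move=> /is_orthogonalP /(_ k k); rewrite eqxx mulr1n => col_k.
have : Q i k ^+ 2 <= 1.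
  by rewrite -col_k (bigD1 i) //= expr2 lerDl sumr_ge0 // => l _; rewrite -expr2 sqr_ge0.
by rewrite ler_norml => Qik_le; apply/andP; split; nra.
Qed.

Lemma orthogonal_vec_compact :
  compact [set v : 'rV[R]_(d * d) | Defs.is_orthogonal (vec_mx v)].
Proof.
apply: bounded_closed_compact.
  exists 1; split; first by rewrite num_real.
  move=> M M_gt1 v v_orth /=; rewrite [leLHS]/Num.norm /= mx_normrE.
  apply: bigmax_le => [|[i k] _ /=]; first exact: le_trans (ltW M_gt1).
  rewrite ord1; apply: le_trans (ltW M_gt1).
  case: (mxvec_indexP k) => a b.
  by rewrite -[v]vec_mxK mxvecE; exact: orthogonal_entry_le1.
have -> : [set v : 'rV[R]_(d * d) | Defs.is_orthogonal (vec_mx v)] =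
    \bigcap_(kl in [set: 'I_d * 'I_d])
      [set v | \sum_i vec_mx v i kl.1 * vec_mx v i kl.2 = (kl.1 == kl.2)%:R].
  apply/seteqP; split => v /=.
    by move=> /is_orthogonalP v_orth [k l] _; exact: v_orth.
  by move=> v_orth; apply/is_orthogonalP => k l; exact: (v_orth (k, l)).
apply: closed_bigI => -[k l] _.
have gram_cont :
    continuous (fun v : 'rV[R]_(d * d) => \sum_i vec_mx v i k * vec_mx v i l).
  by apply: continuous_sum => i v; apply: continuousM; exact: continuous_vec_mx_entry.
exact: preimage_closed (fun v _ => gram_cont v) (closed_eq (y := ((k == l)%:R : R))).
Qed.

Lemma orthogonal_argmin (f : 'M[R]_d -> R) :
    continuous (fun v : 'rV[R]_(d * d) => f (vec_mx v)) ->
  exists2 Q, Defs.is_orthogonal Q & forall Q', Defs.is_orthogonal Q' -> f Q <= f Q'.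
Proof.
move=> f_cont.
have O_neq0 : [set v : 'rV[R]_(d * d) | Defs.is_orthogonal (vec_mx v)] !=set0.
  by exists (mxvec 1%:M); rewrite /= mxvecK /Defs.is_orthogonal trmx1 mul1mx.
have [v] := compact_EVT_min O_neq0 orthogonal_vec_compact (continuous_subspaceT f_cont).
rewrite inE => v_orth v_min; exists (vec_mx v) => // Q' Q'_orth.
have := v_min (mxvec Q'); rewrite mxvecK; apply.
by rewrite inE /= mxvecK.
Qed.

Lemma continuous_rot_cost (I : finType) (u y : I -> 'cV[R]_d) :
  continuous (fun v : 'rV[R]_(d * d) => rot_cost u y (vec_mx v)).
Proof.
rewrite /rot_cost /dot; apply: continuous_sum => j; apply: continuous_sum => k.
have entry_cont : continuous (fun v : 'rV[R]_(d * d) => (u j - vec_mx v *m y j) k 0).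
  have -> : (fun v : 'rV[R]_(d * d) => (u j - vec_mx v *m y j) k 0) =
      (fun v => u j k 0 - \sum_l vec_mx v k l * y j l 0).
    by apply: boolp.funext => v; rewrite !mxE.
  move=> v; apply: continuousB; first exact: cst_continuous.
  apply: continuous_sum => l {}v; apply: continuousM; last exact: cst_continuous.
  exact: continuous_vec_mx_entry.
by move=> v; apply: continuousM; exact: entry_cont.
Qed.

End OrthogonalArgmin.

Section ProcrustesBounds.
Local Open Scope classical_set_scope.
Variables (R : realType) (d n : nat).
Implicit Types (X Y : 'M[R]_(d, n)) (p : 'S_n) (Q : 'M[R]_d) (t : 'cV[R]_d).

Lemma coldistE X i j : coldist X i j = vnorm (col i X - col j X).
Proof.
rewrite /coldist /vnorm /dot; congr Num.sqrt.
by apply: eq_bigr => k _; rewrite !mxE expr2.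
Qed.

Lemma colnormE X j : colnorm X j = vnorm (col j X).
Proof.
rewrite /colnorm /vnorm /dot; congr Num.sqrt.
by apply: eq_bigr => k _; rewrite !mxE expr2.
Qed.

Lemma coldist_ge0 X i j : 0 <= coldist X i j.
Proof. exact: sqrtr_ge0. Qed.

Lemma coldist_le2 X i j : norm12 X <= 1 -> coldist X i j <= 2.
Proof.
move=> X_le1; have col_le1 k : vnorm (col k X) <= 1.
  by rewrite -colnormE; apply: le_trans X_le1; exact: le_bigmax.
rewrite coldistE; apply: le_trans (vnormB_le _ _) _.
by have := col_le1 i; have := col_le1 j; lra.
Qed.

Definition residual X Y p Q t j := col j X - Q *m col (p j) Y + t.

Lemma procrustes_costE X Y p Q t :
  procrustes_cost X Y p Q t = \sum_j dot (residual X Y p Q t j) (residual X Y p Q t j).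
Proof.
apply: eq_bigr => j _; apply: eq_bigr => i _; rewrite expr2 !mxE.
by congr ((_ - _ + _) * (_ - _ + _)); apply: eq_bigr => k _; rewrite !mxE.
Qed.

Lemma procrustes_cost_ge0 X Y p Q t : 0 <= procrustes_cost X Y p Q t.
Proof. by rewrite procrustes_costE sumr_ge0 // => j _; exact: dotvv_ge0. Qed.

Lemma hgw_cost_ge0 X Y p : 0 <= hgw_cost X Y p.
Proof. by apply: sumr_ge0 => i _; apply: sumr_ge0. Qed.

Lemma hgw_le_procrustes X Y p Q t : Defs.is_orthogonal Q ->
  hgw_cost X Y p <= 2 * (n%:R * Num.sqrt n%:R) * Num.sqrt (procrustes_cost X Y p Q t).
Proof.
move=> Q_orth; pose e := residual X Y p Q t.
have dist_le i j :
    `|coldist X i j - coldist Y (p i) (p j)| <= vnorm (e i) + vnorm (e j).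
  rewrite !coldistE -[vnorm (col (p i) Y - _)](orthogonal_vnorm _ Q_orth) mulmxBr.
  apply: le_trans (vnorm_dist_le _ _) _.
  have -> : col i X - col j X - (Q *m col (p i) Y - Q *m col (p j) Y) = e i - e j.
    by apply/matrixP => a b; rewrite !mxE; ring.
  exact: vnormB_le.
have sum_le : \sum_i vnorm (e i) <= Num.sqrt n%:R * Num.sqrt (procrustes_cost X Y p Q t).
  by rewrite procrustes_costE -[in Num.sqrt n%:R](card_ord n); exact: sum_vnorm_le.
apply: le_trans (_ : _ <= \sum_i \sum_j (vnorm (e i) + vnorm (e j))) _.
  by apply: ler_sum => i _; apply: ler_sum => j _; exact: dist_le.
have -> : \sum_i \sum_j (vnorm (e i) + vnorm (e j)) = 2 * n%:R * \sum_i vnorm (e i).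
  under eq_bigr do rewrite big_split /= sumr_const card_ord.
  rewrite big_split /= sumr_const card_ord sumrMnl.
  by rewrite -natrM mulr_natl mulnC mulrnA mulr2n.
by apply: le_trans (ler_wpM2l _ sum_le) _; rewrite ?mulr_ge0 ?ler0n // !mulrA.
Qed.

Definition procrustes_costs X Y := [set c | exists p Q t,
  Defs.is_orthogonal Q /\ c = procrustes_cost X Y p Q t].

Lemma procrustes_costs_neq0 X Y : procrustes_costs X Y !=set0.
Proof.
exists (procrustes_cost X Y 1%g 1%:M 0), 1%g, 1%:M, 0.
by rewrite /Defs.is_orthogonal trmx1 mul1mx.
Qed.

Lemma dG_sqr_le X Y p Q t : Defs.is_orthogonal Q ->
  dG X Y ^+ 2 <= procrustes_cost X Y p Q t.
Proof.
move=> Q_orth; rewrite sqr_sqrtr; last first.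
  apply: lb_le_inf; first exact: procrustes_costs_neq0.
  by move=> _ [p' [Q' [t' [_ ->]]]]; exact: procrustes_cost_ge0.
apply: ge_inf; last by exists p, Q, t.
by exists 0 => _ [p' [Q' [t' [_ ->]]]]; exact: procrustes_cost_ge0.
Qed.

Lemma dD_le_hgw X Y p : dD X Y <= hgw_cost X Y p.
Proof. by apply: ge_inf; [exists 0 => _ [q ->]; exact: hgw_cost_ge0 | exists p]. Qed.

Lemma le_dD X Y L : (forall p, L <= hgw_cost X Y p) -> L <= dD X Y.
Proof.
by move=> L_le; apply: lb_le_inf => [|_ [p ->] //]; exists (hgw_cost X Y 1%g), 1%g.
Qed.

Lemma dD_le_dG X Y : (0 < n)%N ->
  dD X Y <= 2 * (n%:R * Num.sqrt n%:R) * dG X Y.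
Proof.
move=> n_gt0; set K := 2 * _.
have K_gt0 : 0 < K by rewrite !mulr_gt0 ?ltr0n ?sqrtr_gt0 ?ltr0n.
have q_ge0 : 0 <= dD X Y / K.
  by apply: divr_ge0 (ltW K_gt0); apply: le_dD => p; exact: hgw_cost_ge0.
rewrite mulrC -ler_pdivrMr // /dG -(ger0_norm q_ge0) -sqrtr_sqr; apply: ler_wsqrtr.
apply: lb_le_inf => [|_ [p [Q [t [Q_orth ->]]]]].
  exact: procrustes_costs_neq0.
rewrite -[procrustes_cost _ _ _ _ _]sqr_sqrtr ?procrustes_cost_ge0 //.
rewrite ler_sqr ?nnegrE ?sqrtr_ge0 // ler_pdivrMr // mulrC.
exact: le_trans (dD_le_hgw X Y p) (hgw_le_procrustes X Y p t Q_orth).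
Qed.

Lemma sum_sqr_sqdist_le X Y p : norm12 X <= 1 -> norm12 Y <= 1 ->
  \sum_i \sum_j (coldist X i j ^+ 2 - coldist Y (p i) (p j) ^+ 2) ^+ 2 <=
  16 * hgw_cost X Y p ^+ 2.
Proof.
move=> X_le1 Y_le1.
apply: (@le_trans _ _ (16 * \sum_i \sum_j (coldist X i j - coldist Y (p i) (p j)) ^+ 2)).
  rewrite mulr_sumr; apply: ler_sum => i _; rewrite mulr_sumr; apply: ler_sum => j _.
  by apply: sqr_subr_sqr_le; rewrite ?coldist_ge0 ?coldist_le2.
by rewrite ler_wpM2l // /hgw_cost !pair_bigA /=; exact: sum_sqr_le_sqr_sum_norm.
Qed.

Lemma procrustes_le_hgw X Y p : (0 < n)%N -> norm12 X <= 1 -> norm12 Y <= 1 ->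
  exists Q t, Defs.is_orthogonal Q /\
    procrustes_cost X Y p Q t <= (4 * n%:R + 2) * hgw_cost X Y p.
Proof.
move=> n_gt0 X_le1 Y_le1.
pose xs j := col j X; pose ys j := col (p j) Y.
have [Q Q_orth Q_min] := orthogonal_argmin
  (continuous_rot_cost (u := centered xs) (y := centered ys)).
exists Q, (Q *m centroid ys - centroid xs); split => //.
have costE : procrustes_cost X Y p Q (Q *m centroid ys - centroid xs) =
    rot_cost (centered xs) (centered ys) Q.
  rewrite procrustes_costE; apply: eq_bigr => j _.
  suff -> : residual X Y p Q (Q *m centroid ys - centroid xs) j =
      centered xs j - Q *m centered ys j by [].
  by rewrite /residual /centered mulmxBr; apply/matrixP => a b; rewrite !mxE; ring.
have gram_le : \sum_i \sum_j (dot (centered xs i) (centered xs j) -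
    dot (Q *m centered ys i) (Q *m centered ys j)) ^+ 2 <= 4 * hgw_cost X Y p ^+ 2.
  under eq_bigr do under eq_bigr do rewrite orthogonal_dot //.
  apply: le_trans (gram_centered_sqr_le n_gt0 xs ys) _.
  under eq_bigr do under eq_bigr do rewrite -!vnorm_sqr -!coldistE.
  by have := sum_sqr_sqdist_le p X_le1 Y_le1; lra.
have cost_sqr_le : procrustes_cost X Y p Q (Q *m centroid ys - centroid xs) ^+ 2 <=
    8 * n%:R * hgw_cost X Y p ^+ 2.
  have := sqr_sum_dist_le_gram (crossmx_psd Q_orth Q_min) (crossmx_sym Q_orth Q_min).
  rewrite card_ord costE /rot_cost /= => gram_bound.
  by have := ler0n R n; nra.
rewrite -ler_sqr ?nnegrE ?procrustes_cost_ge0 //; last first.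
  by rewrite mulr_ge0 ?hgw_cost_ge0 // addr_ge0 // mulr_ge0 ?ler0n.
apply: le_trans cost_sqr_le _; rewrite exprMn ler_wpM2r ?sqr_ge0 //.
by have := ler0n R n; nra.
Qed.

End ProcrustesBounds.

Theorem theorem1 (R : realType) (n d : nat) (hn : (0 < n)%N) (hd : (0 < d)%N) :
  (forall X Y : 'M[R]_(d, n),
     dD X Y <= 2 * (n%:R * Num.sqrt n%:R) * dG X Y) /\
  (forall X Y : 'M[R]_(d, n),
     norm12 X <= 1 -> norm12 Y <= 1 ->
     (4 * n%:R + 2)^-1 * dG X Y ^+ 2 <= dD X Y).
Proof.
split=> X Y; first exact: dD_le_dG.
move=> X_le1 Y_le1; apply: le_dD => p.
have [Q [t [Q_orth cost_le]]] := procrustes_le_hgw p hn X_le1 Y_le1.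
rewrite ler_pdivrMl ?ltr_wpDl ?mulr_ge0 ?ler0n //.
exact: le_trans (dG_sqr_le X Y p t Q_orth) cost_le.
Qed.
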